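(* Let $G$ be a finite group and $p$ a prime. Then $|G|_{p'}\,\chi(\mathcal O^*_G)$ is an integer.
   Context: $|G|_{p'}$ is the largest divisor of $|G|$ prime to $p$. $\mathcal O^*_G$ is the orbit category of nonidentity $p$-subgroups: objects are the nonidentity $p$-subgroups of $G$, morphisms $\mathcal O^*_G(H,K)=N_G(H,K)/K$ with $N_G(H,K)=\{g\in G: g^{-1}Hg\le K\}$, composition induced by multiplication. $\chi$ is Leinster's Euler characteristic: for a finite category $\mathcal C$, a weighting is $k^\bullet$ with $\sum_b|\mathcal C(a,b)|k^b=1$ for all objects $a$, a coweighting is $k_\bullet$ with $\sum_ak_a|\mathcal C(a,b)|=1$ for all $b$, and if both exist $\chi(\mathcal C)=\sum_bk^b=\sum_ak_a$ (this exists for $\mathcal O^*_G$). *)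

From HB Require Import structures.
From mathcomp Require Import all_boot all_order all_algebra all_fingroup all_solvable.
Set Implicit Arguments. Unset Strict Implicit. Unset Printing Implicit Defensive.
Import GRing.Theory Num.Theory.

Local Open Scope group_scope.

Section OrbitCategory.
Variables (gT : finGroupType) (G : {group gT}) (p : nat).

(* Objects of O*_G : the nonidentity p-subgroups of G. *)
Definition orbObj : {set {group gT}} :=
  [set H : {group gT} | [&& H \subset G, p.-group H & H :!=: 1]].

(* N_G(H,K) = { g in G | g^-1 H g <= K }  (H :^ g = g^-1 H g in mathcomp). *)
Definition transporter (H K : {group gT}) : {set gT} :=
  [set g in G | H :^ g \subset K].

(* |O*_G(H,K)| = |N_G(H,K)/K|, the number of cosets gK with g in N_G(H,K). *)
Definition orbHom (H K : {group gT}) : nat :=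
  #|lcosets K (transporter H K)|.

Definition is_weighting (k : {group gT} -> rat) : Prop :=
  forall a : {group gT}, a \in orbObj ->
    (\sum_(b in orbObj) (orbHom a b)%:R * k b = 1)%R.

Definition is_coweighting (k : {group gT} -> rat) : Prop :=
  forall b : {group gT}, b \in orbObj ->
    (\sum_(a in orbObj) k a * (orbHom a b)%:R = 1)%R.

End OrbitCategory.

From HB Require Import structures.
From mathcomp Require Import all_boot all_order all_algebra all_fingroup all_solvable.
From mathcomp Require Import zify ring.
Import GRing.Theory Num.Theory.
Set Implicit Arguments. Unset Strict Implicit. Unset Printing Implicit Defensive.
Local Open Scope group_scope.

(* A weighting of O*_G is b |-> |b| mu(b) / |G|, where mu(b) is minus the
   reduced Euler characteristic of the poset of nonidentity p-subgroups
   strictly above b: since the upper sums of mu are all 1, the transporter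
   sets N_G(a, b) give sum_b |N_G(a, b)| mu(b) = sum_(g in G) 1 = |G|.
   A coweighting is obtained by solving a unitriangular system, so chi(O*_G)
   is the sum of this weighting, and it remains to see that |G|_p divides
   sum_b |b| mu(b). Summing over conjugacy classes, the class of b contributes
   |G : N_G(b)| |b| mu(b), and |G|_p divides it because |R : b| divides mu(b)
   for a Sylow p-subgroup R of N_G(b). This last fact is Brown's argument:
   count the chains above b by their stabilizer in R; for b < Q <= R the
   Q-invariant part of the poset is contractible (c <= cQ >= Q), so only the
   chains with stabilizer exactly b survive, and they come in R-orbits of
   length |R : b|. *)

Section SubgroupPosetSums.
Local Open Scope ring_scope.
Variables (gT : finGroupType) (V : zmodType) (D : {set {group gT}}).
Implicit Types (a b : {group gT}) (f g : {group gT} -> V).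

Lemma sum_subset_proper g a : a \in D ->
  \sum_(b in D | b \subset a) g b = g a + \sum_(b in D | b \proper a) g b.
Proof.
move=> Da; rewrite (bigD1 a) ?Da ?subxx //=; congr (_ + _).
by apply: eq_bigl => b; rewrite properEneq andbAC -andbA.
Qed.

Lemma sum_supset_proper g a : a \in D ->
  \sum_(b in D | a \subset b) g b = g a + \sum_(b in D | a \proper b) g b.
Proof.
move=> Da; rewrite (bigD1 a) ?Da ?subxx //=; congr (_ + _).
by apply: eq_bigl => b; rewrite properEneq eq_sym andbAC -andbA.
Qed.

Lemma eq_in_upper_sums f g :
  {in D, forall a, \sum_(b in D | a \subset b) f b = \sum_(b in D | a \subset b) g b} ->
  {in D, f =1 g}.
Proof.
move=> eq_sums.
suff IH n a : a \in D -> (#|gT| - #|a| < n)%N -> f a = g a.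
  by move=> a Da; apply: IH Da (ltnSn _).
elim: n a => // n IH a Da lt_a.
have := eq_sums a Da; rewrite !sum_supset_proper // (eq_bigr g) => [/addIr //|b].
case/andP=> Db /proper_card lt_ab; apply: IH => //.
rewrite -ltnS (leq_trans _ lt_a) // ltnS ltn_sub2l //.
exact: leq_trans lt_ab (max_card _).
Qed.

Lemma lower_sums_onto f :
  exists g, {in D, forall a, \sum_(b in D | b \subset a) g b = f a}.
Proof.
suff [g sol_g] : exists g, {in D, forall a, (#|a| < #|gT|.+1)%N ->
    \sum_(b in D | b \subset a) g b = f a}.
  by exists g => a Da; apply: sol_g; rewrite ?ltnS ?max_card.
elim: #|gT|.+1 => [|n [g sol_g]]; first by exists (fun _ => 0).
pose g' b := if #|b| == n then (f b - \sum_(c in D | c \proper b) g c) else g b.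
exists g' => a Da lt_a.
have g'_lt b : (#|b| < n)%N -> g' b = g b by rewrite /g'; case: eqP => // ->; rewrite ltnn.
have lt_proper b : b \proper a -> (#|b| < n)%N.
  by move/proper_card => lt_ba; apply: leq_trans lt_ba _.
rewrite sum_subset_proper // (eq_bigr g) => [|b /andP[_ /lt_proper/g'_lt //]].
rewrite /g'; case: eqP => [_|/eqP ne_an]; first by rewrite subrK.
by rewrite -sum_subset_proper // sol_g // ltn_neqAle ne_an -ltnS.
Qed.

End SubgroupPosetSums.

Section OrderComplex.
Local Open Scope ring_scope.
Variable gT : finGroupType.
Implicit Types (Z s t : {set {group gT}}) (c q x y z : {group gT}).

Definition is_chain s := [forall x in s, forall y in s, (x \subset y) || (y \subset x)].

Definition chain_in Z s := (s \subset Z) && is_chain s.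

(* The empty chain is counted, so this is minus the reduced Euler
   characteristic of the order complex of Z. *)
Definition chain_euler Z : int := \sum_(s | chain_in Z s) (-1) ^+ #|s|.

Definition above Z c := [set z in Z | c \proper z].

Definition upset Z c := [set z in Z | c \subset z].

Lemma is_chainP s :
  reflect {in s &, forall x y, (x \subset y) || (y \subset x)} (is_chain s).
Proof.
apply: (iffP forall_inP) => [chs x y xs ys | chs x xs].
  by have /forall_inP := chs x xs; apply.
by apply/forall_inP => y ys; apply: chs.
Qed.

Lemma is_chainS s t : t \subset s -> is_chain s -> is_chain t.
Proof.
by move=> /subsetP ts /is_chainP chs; apply/is_chainP => x y /ts xs /ts; apply: chs.
Qed.

Lemma is_chainU1 c t : {in t, forall x, c \subset x} -> is_chain t -> is_chain (c |: t).
Proof.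
move=> c_min /is_chainP cht; apply/is_chainP => x y; rewrite !inE.
by case/predU1P=> [->|xt]; case/predU1P=> [->|yt]; rewrite ?subxx ?c_min ?orbT ?cht.
Qed.

Lemma chain_inU1 Z q s : q \in Z -> {in Z, forall z, q \subset z} -> q \notin s ->
  chain_in Z (q |: s) = chain_in Z s.
Proof.
move=> Zq q_min _; apply/andP/andP => [[sZ chs]|[sZ chs]].
  by split; [apply: subset_trans sZ | apply: is_chainS chs]; apply: subsetUr.
split; first by rewrite subUset sub1set Zq.
by apply: is_chainU1 => // x /(subsetP sZ); apply: q_min.
Qed.

Lemma chain_euler_cone Z q : q \in Z -> {in Z, forall z, q \subset z} ->
  chain_euler Z = 0.
Proof.
move=> Zq q_min.
pose toggle s := if q \in s then s :\ q else q |: s.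
have toggleK : involutive toggle.
  move=> s; rewrite /toggle; case: (boolP (q \in s)) => qs.
    by rewrite setD11 setD1K.
  by rewrite setU11 setU1K.
have chain_toggle s : chain_in Z (toggle s) = chain_in Z s.
  rewrite /toggle; case: ifPn => qs; last exact: chain_inU1.
  by rewrite -{2}(setD1K qs) chain_inU1 ?setD11.
have sign_toggle s : ((-1) ^+ #|toggle s| = - (-1) ^+ #|s| :> int).
  rewrite /toggle; case: ifPn => qs; last by rewrite cardsU1 qs exprS mulN1r.
  by rewrite -{2}(setD1K qs) cardsU1 setD11 exprS mulN1r opprK.
have : chain_euler Z = - chain_euler Z.
  rewrite {1}/chain_euler (reindex_inj (can_inj toggleK)) /= -sumrN.
  by apply: eq_big => s; rewrite ?chain_toggle ?sign_toggle.
lia.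
Qed.

Definition chain_min s c := (c \in s) && [forall x in s, c \subset x].

Lemma chain_min_unique s c d : chain_min s c -> chain_min s d -> c = d.
Proof.
case/andP=> cs /forall_inP c_min /andP[ds /forall_inP d_min].
by apply/val_inj/eqP; rewrite eqEsubset c_min ?d_min.
Qed.

Lemma chain_min_exists s : is_chain s -> s != set0 -> exists c, chain_min s c.
Proof.
move=> /is_chainP chs /set0Pn[x0 x0s].
have [m ms m_min] := arg_minnP (fun x : {group gT} => #|x|) x0s.
exists m; apply/andP; split=> //; apply/forall_inP => x xs.
case/orP: (chs m x ms xs) => // sxm.
suff -> : m = x :> {set gT} by [].
by apply/eqP; rewrite eq_sym eqEcard sxm m_min.
Qed.

Lemma chain_in_above Z c t : c \in Z ->
  chain_in (above Z c) t = [&& chain_in Z (c |: t), chain_min (c |: t) c & c \notin t].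
Proof.
move=> Zc; apply/andP/and3P => [[/subsetP tZ cht]|].
  have c_lt x : x \in t -> c \proper x by move/tZ; rewrite inE => /andP[].
  have c_sub x : x \in c |: t -> c \subset x.
    by case/setU1P => [-> | /c_lt/proper_sub //]; apply: subxx.
  split.
  - rewrite /chain_in subUset sub1set Zc is_chainU1 // => [|x /c_lt/proper_sub //].
    by rewrite andbT; apply/subsetP => x /tZ; rewrite inE => /andP[].
  - by rewrite /chain_min setU11; apply/forall_inP.
  - by apply/negP => /c_lt; rewrite properxx.
case=> /andP[ctZ chct] /andP[_ /forall_inP c_min] ct.
split; last exact: is_chainS (subsetUr _ _) chct.
apply/subsetP => x xt; rewrite inE (subsetP ctZ) ?setU1r //=.
rewrite properEneq c_min ?setU1r // andbT.
by apply: contraNneq ct => /val_inj ->.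
Qed.

Lemma chain_euler_rec Z : 1 - chain_euler Z = \sum_(c in Z) chain_euler (above Z c).
Proof.
have chain0 : chain_in Z set0.
  by rewrite /chain_in sub0set; apply/is_chainP => x y; rewrite inE.
rewrite /chain_euler (bigD1 set0) //= cards0 expr0 opprD addrA subrr add0r -sumrN.
transitivity (\sum_(s | chain_in Z s && (s != set0))
    \sum_(c in Z | chain_min s c) - (-1) ^+ #|s| : int).
  apply: eq_bigr => s /andP[/andP[sZ chs] s0].
  have [m min_m] := chain_min_exists chs s0.
  rewrite (big_pred1 m) // => c; apply/andP/eqP => [[_ min_c]|->].
    exact: chain_min_unique min_c min_m.
  by case/andP: (min_m) => ms _; rewrite (subsetP sZ).
rewrite (exchange_big_dep (fun c => c \in Z)) /=; last by move=> s c _ /andP[].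
apply: eq_bigr => c Zc.
rewrite (reindex_onto (fun t => c |: t) (fun s => s :\ c)) /=; last first.
  by move=> s /and3P[_ _ /andP[cs _]]; rewrite setD1K.
have ct_eq t : ((c |: t) :\ c == t) = (c \notin t).
  by apply/eqP/idP => [<-|/setU1K //]; rewrite setD11.
apply: eq_big => t.
  have t0 : c |: t != set0 by apply/set0Pn; exists c; rewrite setU11.
  by rewrite chain_in_above // ct_eq Zc t0 andbT /= andbA.
by rewrite ct_eq => /andP[_ ct]; rewrite cardsU1 ct exprS mulN1r opprK.
Qed.

Lemma above_upset Z y c : c \in upset Z y -> above (upset Z y) c = above Z c.
Proof.
rewrite inE => /andP[Zc yc]; apply/setP => z; rewrite !inE.
apply: andb_id2r => /proper_sub cz; apply: andb_idr => Zz.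
exact: subset_trans yc cz.
Qed.

Lemma sum_chain_euler_above Z y : y \in Z ->
  \sum_(z in Z | y \subset z) chain_euler (above Z z) = 1.
Proof.
move=> Zy; have := chain_euler_rec (upset Z y).
rewrite (@chain_euler_cone _ y) ?subr0 => [->||]; first last.
- by move=> z; rewrite inE => /andP[].
- by rewrite inE Zy subxx.
rewrite [LHS](eq_bigl [in upset Z y]) => [|z]; last by rewrite inE.
by apply: eq_bigr => z yz; rewrite above_upset.
Qed.

(* Quillen's argument: c <= f c >= Q contracts the order complex of Z. *)
Lemma chain_euler_closure Z Q (f : {group gT} -> {group gT}) : Q \in Z ->
  {in Z, forall c, [/\ f c \in Z, c \subset f c, Q \subset f c &
     {in Z, forall z, c \subset z -> Q \subset z -> f c \subset z}]} ->
  chain_euler Z = 0.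
Proof.
move=> ZQ closure.
(* [h] and [chain_euler \o above Z] both have all upper sums equal to 1 on Z. *)
pose h c := if Q \subset c then chain_euler (above Z c) else 0.
have h_sums : {in Z, forall y, \sum_(z in Z | y \subset z) h z =
    \sum_(z in Z | y \subset z) chain_euler (above Z z)}.
  move=> y Zy; have [Zfy sfy Qfy fy_min] := closure y Zy.
  rewrite -big_mkcondr /= !sum_chain_euler_above // -(sum_chain_euler_above Zfy).
  apply: eq_bigl => z; rewrite -andbA; apply: andb_id2l => Zz.
  by apply/andP/idP => [[yz Qz]|fyz]; [apply: fy_min | split; apply: subset_trans fyz].
have := chain_euler_rec Z.
rewrite (eq_bigr h) => [|c Zc]; last by rewrite (eq_in_upper_sums h_sums).
rewrite -big_mkcondr /= sum_chain_euler_above //.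
lia.
Qed.

End OrderComplex.

Lemma dvdz_sum_orbit (aT : finGroupType) (rT : finType) (to : {action aT &-> rT})
    (G : {group aT}) (A : {set rT}) (f : rT -> int) (d : int) :
  (forall x a, x \in A -> a \in G -> to x a \in A) ->
  (forall x a, x \in A -> a \in G -> f (to x a) = f x) ->
  {in A, forall x, (d %| (#|orbit to G x|%:Z * f x)%R)%Z} ->
  (d %| (\sum_(x in A) f x)%R)%Z.
Proof.
move=> A_stable fJ d_orbit.
have GactA : [acts G, on A | to].
  apply/actsP => a Ga x; apply/idP/idP => [xaA|/A_stable]; last exact.
  by have := A_stable _ a^-1 xaA; rewrite actK groupV; apply.
rewrite (set_partition_big _ (orbit_partition GactA)) /=.
apply: rpred_sum => _ /imsetP[x Ax ->].
rewrite (eq_bigr (fun=> f x)) => [|_ /orbitP[a Ga <-]]; last exact: fJ.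
by rewrite sumr_const -mulr_natl natz d_orbit.
Qed.

Section ChainEulerDivisibility.
Local Open Scope ring_scope.
Variables (gT : finGroupType) (b R : {group gT}) (Y : {set {group gT}}).
Hypotheses (sbR : b \subset R) (nbR : R \subset 'N(b)).
Hypothesis Y_stable : forall c r, c \in Y -> r \in R -> (c :^ r)%G \in Y.
Hypothesis b_low : {in Y, forall c : {group gT}, b \subset c}.
Hypothesis euler_fixed : forall Q : {group gT}, b \proper Q -> Q \subset R ->
  chain_euler [set c in Y | Q \subset 'N(c)] = 0.

Local Notation to := ('JG^*)%act.

Lemma sub_chain_stab s (Q : {group gT}) : chain_in Y s -> Q \subset R ->
  (Q \subset 'C_R[s | to]) = chain_in [set c in Y | Q \subset 'N(c)] s.
Proof.
move=> /andP[sY chs] QR.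
rewrite /chain_in chs andbT subsetI QR /=.
apply/idP/idP => [/subsetP QC|/subsetP sQ].
  apply/subsetP => c cs; rewrite inE (subsetP sY _ cs) /=.
  apply/subsetP => q qQ; have /astab1P sq := QC q qQ.
  have cqs : (c :^ q)%G \in s by rewrite -sq /= setactE; apply: imset_f.
  (* c and c :^ q are comparable members of the chain of the same order. *)
  apply/normP; case/orP: (is_chainP _ chs _ _ cqs cs) => sub.
    by apply/eqP; rewrite eqEcard sub cardJg leqnn.
  by apply/esym/eqP; rewrite eqEcard sub cardJg leqnn.
apply/subsetP => q qQ; apply/astab1P.
rewrite /= setactE -[RHS]imset_id; apply: eq_in_imset => c cs.
have := sQ c cs; rewrite inE => /andP[_ /subsetP /(_ q qQ) /normP nq].
exact: val_inj.
Qed.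

Lemma sub_bottom_chain_stab s : chain_in Y s -> b \subset 'C_R[s | to].
Proof.
move=> chs; rewrite sub_chain_stab //; case/andP: chs => sY chs.
rewrite /chain_in chs andbT; apply/subsetP => c cs; have Yc := subsetP sY _ cs.
by rewrite inE Yc (subset_trans (b_low Yc)) ?normG.
Qed.

Definition stab_count (Q : {group gT}) : int :=
  \sum_(s | chain_in Y s && ('C_R[s | to] == Q :> {set gT})) (-1) ^+ #|s|.

Lemma sum_stab_count (P : pred {group gT}) :
  \sum_(Q | P Q) stab_count Q =
  \sum_(s | chain_in Y s && P ('C_R[s | to])%G) (-1) ^+ #|s|.
Proof.
rewrite [RHS](partition_big (fun s => ('C_R[s | to])%G) P) => [|s /andP[] //].
apply: eq_bigr => Q PQ; apply: eq_bigl => s; rewrite -andbA; apply: andb_id2l => _.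
apply/eqP/andP => [stab_s|[_ /eqP <- //]].
by have -> : ('C_R[s | to])%G = Q by apply: val_inj.
Qed.

Lemma stab_count_eq0 (Q : {group gT}) :
  ~~ ((b \subset Q) && (Q \subset R)) -> stab_count Q = 0.
Proof.
move=> bQR; rewrite /stab_count big1 // => s /andP[chs /eqP stab_s].
by move: bQR; rewrite -stab_s sub_bottom_chain_stab // subsetIl.
Qed.

Lemma stab_count_proper_eq0 (Q : {group gT}) :
  b \proper Q -> Q \subset R -> stab_count Q = 0.
Proof.
(* The upper sums of [stab_count] on ]b, R] are the vanishing [euler_fixed]. *)
move=> bQ QR; pose D := [set Q : {group gT} | b \proper Q & Q \subset R].
suff D_eq0 : {in D, stab_count =1 (fun=> 0)} by rewrite D_eq0 // inE bQ.
apply: eq_in_upper_sums => {bQ QR} {}Q; rewrite inE => /andP[bQ QR]; rewrite big1_eq.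
rewrite -[in RHS](euler_fixed bQ QR) big_mkcondl /=.
transitivity (\sum_(Q' : {group gT} | Q \subset Q') stab_count Q').
  apply: eq_bigr => Q' QQ'; case: ifPn => // /negbTE notD.
  rewrite stab_count_eq0 //; apply: contraFN notD => /andP[_ Q'R].
  by rewrite inE Q'R andbT (proper_sub_trans bQ).
rewrite sum_stab_count; apply: eq_bigl => s.
case chs: (chain_in Y s); first by rewrite sub_chain_stab.
symmetry; apply: contraFF chs => /andP[sYQ cs]; rewrite /chain_in cs andbT.
by apply: subset_trans sYQ _; apply/subsetP => c; rewrite inE => /andP[].
Qed.

Lemma stab_act s r : r \in R -> 'C_R[to s r | to] = 'C_R[s | to] :^ r.
Proof. by move=> Rr; rewrite astab1_act [RHS]conjIg (conjGid Rr). Qed.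

Lemma chain_in_act s r : r \in R -> chain_in Y s -> chain_in Y (to s r).
Proof.
move=> Rr /andP[sY chs]; rewrite /chain_in /= setactE; apply/andP; split.
  by apply/subsetP => _ /imsetP[c cs ->]; apply: Y_stable (subsetP sY c cs) Rr.
apply/is_chainP => _ _ /imsetP[c cs ->] /imsetP[d ds ->].
by rewrite /= !conjSg; apply: (is_chainP _ chs).
Qed.

Lemma dvdz_index_chain_euler : (#|R : b|%:Z %| chain_euler Y)%Z.
Proof.
have -> : chain_euler Y = stab_count b.
  rewrite /chain_euler (eq_bigl (fun s => chain_in Y s && predT ('C_R[s | to])%G)) => [|s];
    last by rewrite andbT.
  rewrite -sum_stab_count (bigD1 b) //= big1 ?addr0 // => Q nQb.
  have [/andP[bQ QR]|] := boolP ((b \subset Q) && (Q \subset R)); last exact: stab_count_eq0.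
  by apply: stab_count_proper_eq0 QR; rewrite properEneq bQ andbT eq_sym.
rewrite /stab_count (eq_bigl [in [set s | chain_in Y s && ('C_R[s | to] == b :> {set gT})]]);
  last by move=> s; rewrite inE.
apply: (dvdz_sum_orbit (to := to) (G := R)).
- move=> s r; rewrite !inE => /andP[chs /eqP stab_s] Rr.
  rewrite chain_in_act // stab_act // stab_s /=.
  exact/eqP/normP/(subsetP nbR).
- by move=> s r _ _; rewrite card_setact.
- move=> s; rewrite inE => /andP[_ /eqP stab_s].
  by rewrite card_orbit stab_s dvdz_mulr.
Qed.

End ChainEulerDivisibility.

Section OrbitCategoryEuler.
Local Open Scope ring_scope.
Variables (gT : finGroupType) (G : {group gT}) (p : nat).
Implicit Types (a b c Q R : {group gT}).

Local Notation S := (orbObj G p).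

Lemma orbObjJ a g : a \in S -> g \in G -> (a :^ g)%G \in S.
Proof.
rewrite !inE /= => /and3P[saG pa a1] Gg.
by rewrite -(conjGid Gg) conjSg saG pgroupJ pa conjsg_eq1.
Qed.

Lemma card_transporter a b : b \subset G ->
  #|transporter G a b| = (orbHom G a b * #|b|)%N.
Proof.
move=> sbG; rewrite /orbHom /lcosets -sum1_card (partition_big_imset (lcoset b)) /=.
rewrite -sum_nat_const; apply: eq_bigr => _ /imsetP[y Ty ->].
rewrite sum1_card -(card_lcoset b y); apply: eq_card => x; rewrite unfold_in /= inE.
move: Ty; rewrite !inE => /andP[Gy ayb].
apply/andP/idP => [[_ /eqP eq_xy]|xyb].
  by rewrite -lcosetE -eq_xy lcosetE lcoset_refl.
split; last by apply/eqP; rewrite !lcosetE; apply/lcoset_eqP.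
case/lcosetP: xyb => z bz ->; rewrite groupM ?(subsetP sbG z bz) //=.
by rewrite conjsgM -(conjGid bz) conjSg.
Qed.

Lemma sum_transporter_l (V : zmodType) (F : {group gT} -> V) a :
  \sum_(b in S) F b *+ #|transporter G a b| =
  \sum_(g in G) \sum_(b in S | a :^ g \subset b) F b.
Proof.
rewrite [RHS](exchange_big_dep [in S]) /= => [|g b _ /andP[] //].
apply: eq_bigr => b Sb; rewrite -sumr_const; apply: eq_bigl => g.
by rewrite inE Sb.
Qed.

Lemma sum_transporter_r (V : zmodType) (F : {group gT} -> V) b :
  \sum_(a in S) F a *+ #|transporter G a b| =
  \sum_(g in G) \sum_(a in S | a :^ g \subset b) F a.
Proof.
rewrite [RHS](exchange_big_dep [in S]) /= => [|g a _ /andP[] //].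
apply: eq_bigr => a Sa; rewrite -sumr_const; apply: eq_bigl => g.
by rewrite inE Sa.
Qed.

Definition euler_above b := chain_euler (above S b).

Lemma euler_aboveJ b x : b \in S -> x \in G -> euler_above (b :^ x)%G = euler_above b.
Proof.
move=> Sb Gx; pose h c := (c :^ x)%G.
have h_inj : injective h by move=> c d /(congr1 val)/conjsg_inj/val_inj.
have Sh c : (h c \in S) = (c \in S).
  apply/idP/idP => [/orbObjJ/(_ (groupVr Gx))|/orbObjJ->//].
  by congr (_ \in S); apply: val_inj; rewrite /= conjsgK.
apply: (eq_in_upper_sums (f := euler_above \o h)) (Sb) => a Sa.
rewrite sum_chain_euler_above // -[RHS](sum_chain_euler_above (orbObjJ Sa Gx)).
rewrite [RHS](reindex_inj h_inj) /=.
by apply: eq_bigl => c; rewrite Sh conjSg.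
Qed.

Definition euler_weighting b : rat :=
  #|b|%:R * (euler_above b)%:~R / #|G|%:R.

Lemma euler_weighting_is_weighting : is_weighting G p euler_weighting.
Proof.
move=> a Sa; have G0 : (#|G|%:R : rat) != 0 by rewrite pnatr_eq0 -lt0n.
transitivity ((\sum_(b in S) (euler_above b)%:~R *+ #|transporter G a b|) / #|G|%:R : rat).
  rewrite mulr_suml; apply: eq_bigr => b; rewrite inE => /and3P[sbG _ _].
  by rewrite card_transporter // /euler_weighting -[(_ *+ (_ * _))]mulr_natr natrM; ring.
rewrite sum_transporter_l (eq_bigr (fun=> 1)) ?sumr_const ?mulfV // => g Gg.
by rewrite -rmorph_sum sum_chain_euler_above // orbObjJ.
Qed.

Lemma coweighting_exists : exists k, is_coweighting G p k.
Proof.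
have G0 : (#|G|%:R : rat) != 0 by rewrite pnatr_eq0 -lt0n.
have [k sum_k] := lower_sums_onto S (fun b : {group gT} => #|b|%:R / #|G|%:R : rat).
exists k => b Sb; have b0 : (#|b|%:R : rat) != 0 by rewrite pnatr_eq0 -lt0n.
apply: (mulIf b0); rewrite mul1r mulr_suml.
transitivity (\sum_(a in S) k a *+ #|transporter G a b|).
  apply: eq_bigr => a _; move: Sb; rewrite inE => /and3P[sbG _ _].
  by rewrite card_transporter // !mulr_natr mulrnA.
rewrite sum_transporter_r (eq_bigr (fun=> #|b|%:R / #|G|%:R : rat)) => [|g Gg].
  by rewrite sumr_const -[(_ *+ #|G|)]mulr_natr divfK.
rewrite -(cardJg b g^-1) -[#|b :^ g^-1|]/(#|(b :^ g^-1)%G|) -sum_k ?orbObjJ ?groupV //.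
by apply: eq_bigl => a; rewrite sub_conjg.
Qed.

Lemma sum_weighting_coweighting (k k' : {group gT} -> rat) :
  is_weighting G p k -> is_coweighting G p k' ->
  \sum_(b in S) k b = \sum_(a in S) k' a.
Proof.
move=> wk wk'.
transitivity (\sum_(b in S) \sum_(a in S) k' a * (orbHom G a b)%:R * k b).
  by apply: eq_bigr => b Sb; rewrite -mulr_suml wk' // mul1r.
rewrite exchange_big /=; apply: eq_bigr => a Sa.
rewrite (eq_bigr (fun b => k' a * ((orbHom G a b)%:R * k b))) => [|b _]; last first.
  by rewrite mulrA.
by rewrite -mulr_sumr wk // mulr1.
Qed.

Lemma chain_euler_above_fixed b Q : b \in S -> b \proper Q -> p.-group Q -> Q \subset G ->
  chain_euler [set c in above S b | Q \subset 'N(c)] = 0.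
Proof.
rewrite inE => /and3P[_ _ b1] bQ pQ sQG.
apply: (@chain_euler_closure _ _ Q (fun c => (c <*> Q)%G)).
  rewrite !inE sQG pQ bQ normG !andbT /=.
  by apply: contraNN b1 => /eqP Q1; rewrite -subG1 -Q1 proper_sub.
move=> c; rewrite !inE => /andP[/andP[/and3P[scG pc c1] bc] nQc].
have cQ : c <*> Q = (c * Q)%g := norm_joinEr nQc.
split; [|exact: joing_subl|exact: joing_subr|].
- rewrite /= join_subG scG sQG /= cQ pgroupM pc pQ /=.
  rewrite (proper_sub_trans bc (mulG_subl Q c)) -cQ normsY ?normG // !andbT.
  by apply: contraNN c1 => /eqP cQ1; rewrite -subG1 -cQ1 joing_subl.
- by move=> z _ cz Qz; rewrite /= join_subG cz Qz.
Qed.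

Lemma sub_normalizer_sylow b R : b \in S -> p.-Sylow('N_G(b)) R -> b \subset R.
Proof.
rewrite inE => /and3P[sbG pb _] sylR.
exact: subset_trans (pcore_max pb (normalSG sbG)) (pcore_sub_Hall sylR).
Qed.

Lemma dvdz_index_euler_above b R : b \in S -> p.-Sylow('N_G(b)) R ->
  (#|R : b|%:Z %| euler_above b)%Z.
Proof.
move=> Sb sylR; have sRNb := pHall_sub sylR.
have nbR : R \subset 'N(b) := subset_trans sRNb (subsetIr _ _).
have sRG : R \subset G := subset_trans sRNb (subsetIl _ _).
apply: (dvdz_index_chain_euler (sub_normalizer_sylow Sb sylR) nbR).
- move=> c r; rewrite in_set => /andP[Sc bc] Rr.
  by rewrite in_set orbObjJ ?(subsetP sRG) //= -(normP (subsetP nbR r Rr)) properJ.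
- by move=> c; rewrite inE => /andP[_ /proper_sub].
move=> Q bQ sQR.
by rewrite chain_euler_above_fixed ?(pgroupS sQR (pHall_pgroup sylR)) ?(subset_trans sQR).
Qed.

Lemma dvdz_sum_card_euler_above :
  ((#|G|`_p)%:Z %| (\sum_(b in S) #|b|%:Z * euler_above b))%Z.
Proof.
apply: (dvdz_sum_orbit (to := 'JG%act) (G := G)) => [b g Sb Gg|b g Sb Gg|b Sb].
- exact: orbObjJ.
- by rewrite /= cardJg euler_aboveJ.
have [R sylR] := Sylow_exists p 'N_G(b).
have /dvdzP[m ->] := dvdz_index_euler_above Sb sylR.
have Gp : (#|G|`_p = #|G : 'N_G(b)|`_p * (#|b| * #|R : b|))%N.
  rewrite -(Lagrange (subsetIl G 'N(b))) partnM ?cardG_gt0 ?indexg_gt0 //.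
  by rewrite -(card_Hall sylR) -(Lagrange (sub_normalizer_sylow Sb sylR)) mulnC.
rewrite card_orbit astab1JG -(partnC p (indexg_gt0 G 'N_G(b))) Gp.
by apply/dvdzP; exists ((#|G : 'N_G(b)|`_p^')%:Z * m); rewrite !PoszM; ring.
Qed.

Lemma partn'_sum_euler_weighting_int :
  exists z : int, ((#|G|`_p^')%:R * \sum_(b in S) euler_weighting b = z%:~R :> rat).
Proof.
have /dvdzP[m sum_eq] := dvdz_sum_card_euler_above.
have -> : (\sum_(b in S) euler_weighting b =
           (\sum_(b in S) #|b|%:Z * euler_above b)%:~R / #|G|%:R :> rat).
  by rewrite rmorph_sum mulr_suml; apply: eq_bigr => b _; rewrite rmorphM.
have Gp0 : ((#|G|`_p)%:R : rat) != 0 by rewrite pnatr_eq0 -lt0n part_gt0.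
have Gp'0 : ((#|G|`_p^')%:R : rat) != 0 by rewrite pnatr_eq0 -lt0n part_gt0.
have splitG : (#|G|%:R = (#|G|`_p)%:R * (#|G|`_p^')%:R :> rat).
  by rewrite -natrM partnC.
exists m; rewrite sum_eq intrM splitG.
by field; rewrite Gp0 Gp'0.
Qed.

End OrbitCategoryEuler.

Theorem corollary4p4 (gT : finGroupType) (G : {group gT}) (p : nat) :
  prime p ->
  (exists k, is_weighting G p k) /\ (exists k, is_coweighting G p k) /\
  (forall k : {group gT} -> rat, is_weighting G p k ->
     exists z : int,
       ((#|G|`_(p^'))%:R * \sum_(b in orbObj G p) k b = z%:~R)%R).
Proof.
move=> _; have [k' cowk'] := coweighting_exists G p.
have w0 := @euler_weighting_is_weighting _ G p.
split; first by exists (euler_weighting G p).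
split; first by exists k'.
move=> k wk; rewrite (sum_weighting_coweighting wk cowk').
rewrite -(sum_weighting_coweighting w0 cowk').
exact: partn'_sum_euler_weighting_int.
Qed.
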